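(* Let $n\geq 2$, $i\geq 1$ and $2\leq m_1<\dots<m_i\leq n$. Then $A^{C_{m_1}\cdots C_{m_i}}_{[2,n],\emptyset}=A^{\mathrm{id}}_{I,J}$, where $J=\{m_1,\dots,m_i\}$ and $I=[2,n]\setminus J$.
   Context: Let $w_{ij}$, $1\leq i,j\leq n$, be formal variables subject only to $w_{ij}+w_{ji}=0$. Let $[2,n]=\{2,\dots,n\}$. For $\sigma\in S_n$ and a disjoint decomposition $I\sqcup J=[2,n]$, set $$A^\sigma_{I,J}:=\sum_{i\in I}\sum_{\ell=1}^{i-1}w_{\sigma(\ell)\sigma(i)}-\sum_{j\in J}\sum_{\ell=1}^{j-1}w_{\sigma(\ell)\sigma(j)}.$$ Permutations are composed right-to-left: $(\sigma\tau)(k)=\sigma(\tau(k))$. For $m\geq 2$, $C_m$ is the cycle $(1,m,m-1,\dots,2)$, i.e. $1\mapsto m\mapsto m-1\mapsto\dots\mapsto 2\mapsto 1$. *)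

From mathcomp Require Import all_boot all_order all_fingroup all_algebra.
From mathcomp Require Import zify.
Set Implicit Arguments. Unset Strict Implicit. Unset Printing Implicit Defensive.
Import GRing.Theory.
Local Open Scope ring_scope.

(* Convention: the points 1..n of the paper are encoded by the ordinals
   0..n-1 of 'I_n (point k <-> ordinal k-1). *)

Definition pval n (s : {perm 'I_n}) (k : nat) : nat :=
  match insub k.-1 with Some i => (s i).+1 | None => k end.

Definition Ssum (V : zmodType) n (w : nat -> nat -> V) (s : {perm 'I_n}) (k : nat) : V :=
  \sum_(1 <= l < k) w (pval s l) (pval s k).

Definition Aexpr (V : zmodType) n (w : nat -> nat -> V) (s : {perm 'I_n})
  (I J : pred nat) : V :=
  \sum_(2 <= k < n.+1 | I k) Ssum w s k - \sum_(2 <= k < n.+1 | J k) Ssum w s k.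

(* The cycle C_m = (1, m, m-1, ..., 2), in 0-based encoding:
   0 |-> m-1, j |-> j-1 for 1 <= j <= m-1, identity otherwise
   (identity altogether if m > n, where C_m is not used). *)
Definition cyc_nat (n m k : nat) : nat :=
  if (n < m)%N then k else if k == 0%N then m.-1 else if (k < m)%N then k.-1 else k.

Definition cycf n m (i : 'I_n) : 'I_n := insubd i (cyc_nat n m i).

Lemma cyc_nat_lt n m k : (k < n)%N -> (cyc_nat n m k < n)%N.
Proof. move=> Hk; rewrite /cyc_nat; case: (ltnP n m) => // H; case: eqP => _; first lia.
case: (ltnP k m); lia. Qed.

Lemma cycf_inj n m : injective (@cycf n m).
Proof.
move=> i j /(congr1 val); rewrite /cycf !val_insubd !cyc_nat_lt //.
move=> H; apply: val_inj => /=; move: H; rewrite /cyc_nat.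
have Hi := ltn_ord i; have Hj := ltn_ord j.
case: (ltnP n m) => // H; case: (eqVneq (nat_of_ord i) 0%N) => ?; case: (eqVneq (nat_of_ord j) 0%N) => ?;
case: (ltnP (nat_of_ord i) m); case: (ltnP (nat_of_ord j) m); lia.
Qed.

Definition Cyc n m : {perm 'I_n} := perm (@cycf_inj n m).

(* Composition in the paper's convention: (pcomp s t) k = s (t k). *)
Definition pcomp n (s t : {perm 'I_n}) : {perm 'I_n} := (t * s)%g.

Definition cycprod n (ms : seq nat) : {perm 'I_n} :=
  foldr (fun m acc => pcomp (Cyc n m) acc) 1%g ms.

From Pilot Require Import Defs.
From mathcomp Require Import all_boot all_order all_fingroup all_algebra.
From mathcomp Require Import zify.
Set Implicit Arguments. Unset Strict Implicit. Unset Printing Implicit Defensive.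
Import GRing.Theory.
Local Open Scope ring_scope.

(* Summing over the pairs l < k and reindexing by sigma, antisymmetry of w
   gives A^sigma_{[2,n],0} = \sum_{a<b} +-w(a,b), with a minus sign exactly
   when (a,b) is an inversion of sigma^-1, while A^id_{I,J} carries a minus
   sign exactly when b \in J.  So it suffices that the inversions of
   (C_{m_1} ... C_{m_i})^-1 are the pairs a < b with b \in J.  This follows by
   induction on i: C_{m_1}^-1 sends m_1 to 1 and shifts 1, ..., m_1 - 1 up by
   one, so it creates exactly the inversions (a, m_1) and preserves the order of
   all other pairs, and every later m_j exceeds m_1. *)

Section PermInversions.

Variables (V : zmodType) (n : nat).

Lemma ord_ltnC (a b : 'I_n) : a != b -> (b < a)%N = ~~ (a < b)%N.
Proof. by move=> ab; rewrite -leqNgt [RHS]leq_eqVlt -[_ == _]/(b == a) eq_sym (negbTE ab). Qed.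

Lemma perm_ltnC (s : {perm 'I_n}) (a b : 'I_n) :
  a != b -> (s b < s a)%N = ~~ (s a < s b)%N.
Proof. by move=> ab; rewrite ord_ltnC // (inj_eq perm_inj). Qed.

Lemma sum_ltn_perm (g : 'I_n -> 'I_n -> V) (s : {perm 'I_n}) :
  (forall a b, g a b = - g b a) ->
  \sum_(k < n) \sum_(l < n | (l < k)%N) g (s l) (s k) =
  \sum_(k < n) \sum_(l < n | (l < k)%N)
     (if ((s^-1)%g k < (s^-1)%g l)%N then - g l k else g l k).
Proof.
move=> g_antisym; rewrite !pair_big_dep /=.
set inv := fun p : 'I_n * 'I_n => ((s^-1)%g p.1 < (s^-1)%g p.2)%N.
have -> : \sum_(p : 'I_n * 'I_n | (p.2 < p.1)%N) g (s p.2) (s p.1) =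
          \sum_(p : 'I_n * 'I_n | ((s^-1)%g p.2 < (s^-1)%g p.1)%N) g p.2 p.1.
  rewrite (reindex (fun p => ((s^-1)%g p.1, (s^-1)%g p.2))) /=.
    by apply: eq_bigr => p _; rewrite !permKV.
  exists (fun p : 'I_n * 'I_n => (s p.1, s p.2)) => p _;
    by rewrite /= ?permK ?permKV -?surjective_pairing.
rewrite (bigID (fun p : 'I_n * 'I_n => (p.2 < p.1)%N)) [RHS](bigID inv) /= addrC.
congr (_ + _).
  rewrite (reindex (fun p : 'I_n * 'I_n => (p.2, p.1))) /=; last first.
    by exists (fun p : 'I_n * 'I_n => (p.2, p.1)) => p _; rewrite -surjective_pairing.
  apply: eq_big => [p|p /andP[-> _]]; last exact: g_antisym.
  rewrite /inv andbC; have [inv12|_] := boolP ((s^-1)%g p.1 < (s^-1)%g p.2)%N; rewrite ?andbF //.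
  by rewrite !andbT -ord_ltnC //; apply: contraTneq inv12 => ->; rewrite ltnn.
apply: eq_big => [p|p /andP[/ltnW inv21 _]]; last by rewrite ltnNge inv21.
rewrite /inv andbC; have [lt21|_] := boolP (p.2 < p.1)%N; rewrite //= -perm_ltnC //.
by apply: contraTneq lt21 => ->; rewrite ltnn.
Qed.

End PermInversions.

Section CycleInversions.

Variable n : nat.

Lemma Cyc_val m (x : 'I_n) : Cyc n m x = cyc_nat n m x :> nat.
Proof. by rewrite permE /cycf val_insubd cyc_nat_lt. Qed.

Lemma CycV_val m (x : 'I_n) : (2 <= m <= n)%N ->
  (Cyc n m)^-1%g x = (if x == m.-1 :> nat then 0 else if x < m.-1 then x.+1 else x)%N :> nat.
Proof.
move=> m_range; set y := (Cyc n m)^-1%g x.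
have -> : x = Cyc n m y by rewrite /y permKV.
have := ltn_ord y; rewrite Cyc_val /cyc_nat (_ : (n < m)%N = false); last lia.
by case: (nat_of_ord y == 0)%N / eqP; case: ltnP; repeat case: ifP; lia.
Qed.

Lemma cycprodV_cons m ms (x : 'I_n) :
  (cycprod n (m :: ms))^-1%g x = (cycprod n ms)^-1%g ((Cyc n m)^-1%g x).
Proof. by rewrite /= /pcomp invMg permM. Qed.

Lemma cycprodV_inversion ms (a b : 'I_n) :
  sorted ltn ms -> all (fun m => 2 <= m <= n)%N ms -> (a < b)%N ->
  ((cycprod n ms)^-1%g b < (cycprod n ms)^-1%g a)%N = (b.+1 \in ms).
Proof.
elim: ms a b => [|m ms IH] a b /=.
  by move=> _ _ ab; rewrite invg1 !perm1 in_nil ltnNge ltnW.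
move=> mms_sorted /andP[m_range ms_range] ab.
have {}IH := IH _ _ (path_sorted mms_sorted) ms_range.
have notin_ms x : (x <= m)%N -> x \notin ms.
  by move=> xm; apply/negP => /(allP (order_path_min ltn_trans mms_sorted)); lia.
rewrite !cycprodV_cons in_cons.
have := CycV_val a m_range; have := CycV_val b m_range.
set c := (Cyc n m)^-1%g => cbE caE.
have [bm|bm|bm] := ltngtP b.+1 m.
- have cb : c b = b.+1 :> nat by rewrite cbE; repeat case: ifP; lia.
  have ca : c a = a.+1 :> nat by rewrite caE; repeat case: ifP; lia.
  rewrite IH cb ?ca // (negbTE (notin_ms b.+2 _)) ?(negbTE (notin_ms b.+1 _)) //; lia.
- have cb : c b = b :> nat by rewrite cbE; repeat case: ifP; lia.
  have ca : (c a < b)%N by rewrite caE; repeat case: ifP; lia.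
  rewrite IH cb // (_ : (b.+1 == m) = false) //; lia.
- have cb : c b = 0 :> nat by rewrite cbE ifT //; apply/eqP; lia.
  have ca : c a = a.+1 :> nat by rewrite caE; repeat case: ifP; lia.
  have cab : c a != c b by apply/eqP => /(congr1 (@nat_of_ord n)); rewrite cb ca.
  rewrite perm_ltnC // IH ca ?cb // (negbTE (notin_ms a.+2 _)) ?orbT //; lia.
Qed.

End CycleInversions.

Section OrdinalForm.

Variables (V : zmodType) (n : nat) (w : nat -> nat -> V).

Lemma pval_ord (s : {perm 'I_n}) (j : 'I_n) : Defs.pval s j.+1 = (s j).+1.
Proof. by rewrite /Defs.pval /= -[nat_of_ord j]/(val j) valK. Qed.

Lemma Ssum_ord (s : {perm 'I_n}) (k : 'I_n) :
  Ssum w s k.+1 = \sum_(l < n | (l < k)%N) w (s l).+1 (s k).+1.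
Proof.
rewrite /Ssum pval_ord big_add1 /= (big_nat_widen _ _ _ _ _ (ltnW (ltn_ord k))) big_mkord.
by apply: eq_bigr => l _; rewrite pval_ord.
Qed.

Lemma sum_Ssum_ord (s : {perm 'I_n}) (P : pred nat) : (0 < n)%N ->
  \sum_(2 <= k < n.+1 | P k) Ssum w s k =
  \sum_(k < n | P k.+1) \sum_(l < n | (l < k)%N) w (s l).+1 (s k).+1.
Proof.
move=> n_gt0; have Ssum1 : Ssum w s 1 = 0 by rewrite /Ssum big_geq.
transitivity (\sum_(1 <= k < n.+1 | P k) Ssum w s k).
  by rewrite [RHS]big_ltn_cond // Ssum1 add0r if_same.
by rewrite big_add1 /= big_mkord; apply: eq_bigr => k _; rewrite Ssum_ord.
Qed.

Lemma Aexpr_all (s : {perm 'I_n}) : (0 < n)%N ->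
  Aexpr w s (fun _ => true) (fun _ => false) =
  \sum_(k < n) \sum_(l < n | (l < k)%N) w (s l).+1 (s k).+1.
Proof. by move=> n_gt0; rewrite /Aexpr !sum_Ssum_ord // big_pred0_eq subr0. Qed.

Lemma Aexpr_id (J : pred nat) : (0 < n)%N ->
  Aexpr w (1%g : {perm 'I_n}) (fun k => ~~ J k) J =
  \sum_(k < n) \sum_(l < n | (l < k)%N) (if J k.+1 then - w l.+1 k.+1 else w l.+1 k.+1).
Proof.
move=> n_gt0; rewrite /Aexpr !sum_Ssum_ord // [RHS](bigID (fun k : 'I_n => J k.+1)) /= addrC.
rewrite -sumrN; congr (_ + _); apply: eq_bigr => k Jk.
  by apply: eq_bigr => l _; rewrite !perm1 (negbTE Jk).
by rewrite -sumrN; apply: eq_bigr => l _; rewrite !perm1 Jk.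
Qed.

End OrdinalForm.

Theorem lemma3p8 (V : zmodType) (w : nat -> nat -> V) (n : nat) (ms : seq nat) :
  (forall a b : nat, (0 < a <= n)%N -> (0 < b <= n)%N -> w a b + w b a = 0) ->
  (2 <= n)%N ->
  (0 < size ms)%N ->
  sorted ltn ms ->
  all (fun m => (2 <= m <= n)%N) ms ->
  Aexpr w (cycprod n ms) (fun _ => true) (fun _ => false)
  = Aexpr w (1%g : {perm 'I_n}) (fun k => k \notin ms) (fun k => k \in ms).
Proof.
move=> w_antisym n_ge2 _ ms_sorted ms_range.
have n_gt0 : (0 < n)%N by lia.
pose g (a b : 'I_n) := w a.+1 b.+1.
have g_antisym a b : g a b = - g b a.
  by apply/eqP; rewrite -addr_eq0; apply/eqP/w_antisym; rewrite /= ltn_ord.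
rewrite Aexpr_all // (Aexpr_id w (fun k => k \in ms)) //.
rewrite (sum_ltn_perm (cycprod n ms) g_antisym).
by apply: eq_bigr => k _; apply: eq_bigr => l lk; rewrite cycprodV_inversion.
Qed.
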